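(* Let $m>3$ be an odd integer, let $G=\mathbb{Z}_{2m}$ and $H=\{0,m\}\le G$. For $1\le i\le\frac{m-1}{2}$ let $S_i=\{i,m-i,m+i,2m-i\}\subseteq\mathbb{Z}_{2m}$. Then the family $\{S_i:1\le i\le \frac{m-1}{2}\}$ partitions $G\setminus H$ and is a $(2m,\frac{m-1}{2},4,2,2m-2)$-DPDF and a $(2m,\frac{m-1}{2},4,2m-6,0)$-EPDF in $G$.
   Context: In an additive group $G$ with identity $0$, let $G^*=G\setminus\{0\}$. For $D\subseteq G$, $\Delta(D)$ is the multiset $\{x-y:x,y\in D,x\ne y\}$; for $D_1,D_2\subseteq G$, $\Delta(D_1,D_2)$ is the multiset $\{x-y:x\in D_1,y\in D_2\}$. For a family $A=\{A_1,\dots,A_s\}$ of pairwise disjoint subsets, ${\rm Int}(A)=\bigcup_i\Delta(A_i)$ and ${\rm Ext}(A)=\bigcup_{i\ne j}\Delta(A_i,A_j)$ (multiset unions). For $|G|=v$, a $(v,s,k,\lambda,\mu)$-DPDF is a family of $s$ pairwise disjoint $k$-subsets of $G^*$ with union $S$ such that ${\rm Int}(A)$ contains each element of $S$ exactly $\lambda$ times and each element of $G\setminus(S\cup\{0\})$ exactly $\mu$ times; a $(v,s,k,\lambda,\mu)$-EPDF is defined the same way using ${\rm Ext}(A)$. A family partitions a set $X$ if its members are pairwise disjoint with union $X$. *)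

From HB Require Import structures.
From mathcomp Require Import all_boot all_order all_algebra.
Set Implicit Arguments. Unset Strict Implicit. Unset Printing Implicit Defensive.
Import GRing.Theory.
Local Open Scope ring_scope.

(* multiplicity of x in Int(A) = union_i Delta(A_i) *)
Definition int_mult (G : finZmodType) (s : nat) (A : 'I_s -> {set G}) (x : G) : nat :=
  (\sum_(i < s) #|[set p : G * G | [&& p.1 \in A i, p.2 \in A i, p.1 != p.2
                                      & (p.1 - p.2)%R == x]]|)%N.

(* multiplicity of x in Ext(A) = union_{i<>j} Delta(A_i, A_j) *)
Definition ext_mult (G : finZmodType) (s : nat) (A : 'I_s -> {set G}) (x : G) : nat :=
  (\sum_(i < s) \sum_(j < s | i != j)
     #|[set p : G * G | [&& p.1 \in A i, p.2 \in A j & (p.1 - p.2)%R == x]]|)%N.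

Definition pairwise_disjoint (G : finType) (s : nat) (A : 'I_s -> {set G}) : Prop :=
  forall i j : 'I_s, i != j -> [disjoint A i & A j].

Definition partitions (G : finType) (s : nat) (A : 'I_s -> {set G}) (X : {set G}) : Prop :=
  pairwise_disjoint A /\ \bigcup_(i < s) A i = X.

Definition pdf_base (G : finZmodType) (v s k : nat) (A : 'I_s -> {set G}) : Prop :=
  [/\ #|G| = v, forall i, #|A i| = k, forall i, (0 : G) \notin A i
    & pairwise_disjoint A].

Definition DPDF (G : finZmodType) (v s k lam mu : nat) (A : 'I_s -> {set G}) : Prop :=
  pdf_base v k A /\
  forall x : G, x != 0 ->
    int_mult A x = (if x \in \bigcup_(i < s) A i then lam else mu).

Definition EPDF (G : finZmodType) (v s k lam mu : nat) (A : 'I_s -> {set G}) : Prop :=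
  pdf_base v k A /\
  forall x : G, x != 0 ->
    ext_mult A x = (if x \in \bigcup_(i < s) A i then lam else mu).

(* S_i = {i, m-i, m+i, 2m-i} in Z_{2m}, indexed by i.+1 for i : 'I_((m-1)/2) *)
Definition Sfam (m : nat) (i : 'I_((m - 1) %/ 2)) : {set 'Z_(2 * m)} :=
  [set (i.+1)%:R; (m - i.+1)%:R; (m + i.+1)%:R; (2 * m - i.+1)%:R].

Definition Hsub (m : nat) : {set 'Z_(2 * m)} := [set 0; m%:R].

From mathcomp Require Import all_boot all_order all_algebra.
From mathcomp Require Import zify ring.
Set Implicit Arguments. Unset Strict Implicit. Unset Printing Implicit Defensive.
Import GRing.Theory.
Local Open Scope ring_scope.

(* Doubling on Z_(2m) has kernel H = {0, m}, and as m is odd, m is not a double;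
   hence for every c exactly two y satisfy 2y = c or 2y = c + m.  The block S_i
   is the set of y with 2y = +-2i, so the blocks are the classes of the relation
   2z = +-2y on G \ H, and by counting (4 (m-1)/2 = 2m - 2) they cover G \ H.
   Thus y and y + x lie in a common block iff 2(y + x) = +-2y: for x = m this
   always holds, while for x outside H it means 2y in {-x, m - x}, which has
   exactly two solutions.  Finally Int + Ext counts all y with y and y + x
   outside H, that is 2m - 2 for x = m and 2m - 4 otherwise. *)

Lemma cards4 (T : finType) (a b c d : T) :
  uniq [:: a; b; c; d] -> #|[set a; b; c; d]| = 4%N.
Proof.
by move=> /card_uniqP /= <-; apply: eq_card => x; rewrite !inE /= !orbA.
Qed.

Lemma card_set_sum (T : finType) (P : pred T) :
  #|[set y | P y]| = (\sum_y (P y : nat))%N.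
Proof. by rewrite -sum1_card big_mkcond; apply: eq_bigr => y _; rewrite inE. Qed.

Lemma card_diff_pairs (G : finZmodType) (B C : {set G}) (x : G) :
  #|[set p : G * G | [&& p.1 \in B, p.2 \in C & p.1 - p.2 == x]]| =
  (\sum_y ((y \in C) && ((y + x)%R \in B) : nat))%N.
Proof.
have shift_inj : injective (fun y : G => (y + x, y)) by move=> y1 y2 [].
rewrite -card_set_sum -(card_imset _ shift_inj).
apply: eq_card => -[p1 p2]; rewrite !inE /=.
apply/and3P/imsetP => [[p1B p2C /eqP <-]|[y]].
  by exists p2; rewrite ?inE addrC subrK ?p1B ?andbT.
by rewrite inE => /andP[yC yxB] [-> ->]; split => //; rewrite addrAC subrr add0r.
Qed.

Section DisjointFamily.
Variables (G : finZmodType) (s : nat) (A : 'I_s -> {set G}).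
Hypothesis A_disj : pairwise_disjoint A.
Local Notation S := (\bigcup_(i < s) A i).

Lemma sum_mem_disjoint (y : G) : (\sum_i (y \in A i : nat) = (y \in S))%N.
Proof.
have [yS|yNS] := boolP (y \in S); last first.
  rewrite big1 // => i _; case: (boolP (y \in A i)) => // yA.
  by case/negP: yNS; apply/bigcupP; exists i.
have [i0 _ yA] := bigcupP yS.
rewrite (bigD1 i0) //= yA big1 // => i ne.
by rewrite (disjointFl (A_disj ne) yA).
Qed.

Lemma int_mult_sum (x : G) : x != 0 ->
  int_mult A x = (\sum_i \sum_y ((y \in A i) && ((y + x)%R \in A i) : nat))%N.
Proof.
move=> x0; apply: eq_bigr => i _; rewrite -card_diff_pairs; apply: eq_card => p.
rewrite !inE; case: (p.1 - p.2 =P x) => [d|_]; last by rewrite !andbF.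
by rewrite -subr_eq0 d x0.
Qed.

Lemma int_multE (x : G) (Q : pred G) : x != 0 ->
  (forall i y, y \in A i -> (y + x \in A i) = Q y) ->
  int_mult A x = #|[set y in S | Q y]|.
Proof.
move=> x0 blockQ; rewrite int_mult_sum // exchange_big card_set_sum.
apply: eq_bigr => y _; rewrite -mulnb -sum_mem_disjoint big_distrl.
apply: eq_bigr => i _ /=.
by case: (boolP (y \in A i)) => [/blockQ ->|]; rewrite ?mul1n ?mul0n.
Qed.

Lemma int_add_ext_mult (x : G) : x != 0 ->
  (int_mult A x + ext_mult A x = #|[set y in S | (y + x)%R \in S]|)%N.
Proof.
move=> x0; transitivity
  (\sum_i \sum_j \sum_y ((y \in A j) && ((y + x)%R \in A i) : nat))%N.
  rewrite int_mult_sum // /ext_mult -big_split; apply: eq_bigr => i _ /=.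
  rewrite [RHS](bigD1 i) //=; congr (_ + _)%N.
  by apply: eq_big => [j|j _]; [rewrite eq_sym | rewrite card_diff_pairs].
under eq_bigr => i _ do rewrite exchange_big.
rewrite card_set_sum exchange_big; apply: eq_bigr => y _.
rewrite -mulnb -!sum_mem_disjoint mulnC big_distrl; apply: eq_bigr => i _ /=.
by rewrite big_distrr; apply: eq_bigr => j _ /=; rewrite mulnC mulnb.
Qed.

End DisjointFamily.

Section CyclicOfOddHalfOrder.
Variable m : nat.
Hypothesis m_odd : odd m.
Local Notation G := 'Z_(2 * m).
Local Notation h := (m%:R : G).

Let m_gt0 : (0 < m)%N := odd_gt0 m_odd.

Lemma double_m_gt1 : (1 < 2 * m)%N.
Proof. lia. Qed.

Lemma card_Z : #|G| = (2 * m)%N.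
Proof. by rewrite card_ord Zp_cast // double_m_gt1. Qed.

Lemma val_natZ k : val (k%:R : G) = (k %% (2 * m))%N.
Proof. exact: val_Zp_nat double_m_gt1 k. Qed.

Lemma val_Z_lt (y : G) : (y < 2 * m)%N.
Proof. by rewrite -[y]natr_Zp val_natZ ltn_pmod // ltnW // double_m_gt1. Qed.

Lemma natZ_eq k l : (k < 2 * m)%N -> (l < 2 * m)%N -> ((k%:R : G) == l%:R) = (k == l).
Proof. by move=> kl ll; rewrite -val_eqE /= !val_natZ !modn_small. Qed.

Lemma double_natZ k : (k%:R : G) *+ 2 = (k.*2)%:R.
Proof. by rewrite -mul2n natrM mulr_natl. Qed.

Lemma double_h : h *+ 2 = 0.
Proof. by rewrite double_natZ -mul2n pchar_Zp // double_m_gt1. Qed.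

Lemma h_neq0 : h != 0.
Proof. by rewrite -[0]/(0%:R) natZ_eq; lia. Qed.

Lemma card_Hsub : #|Hsub m| = 2%N.
Proof. by rewrite cards2 eq_sym h_neq0. Qed.

Lemma card_notH : #|~: Hsub m| = (2 * m - 2)%N.
Proof. by rewrite cardsCs setCK card_Z card_Hsub. Qed.

Lemma natZ_eq0 k : ((k%:R : G) == 0) = (2 * m %| k)%N.
Proof. by rewrite -val_eqE /= val_natZ. Qed.

Lemma double_eq0 (y : G) : (y *+ 2 == 0) = (y \in Hsub m).
Proof.
rewrite -[y]natr_Zp; move: (nat_of_ord y) (val_Z_lt y) => v v_lt.
rewrite double_natZ natZ_eq0 -mul2n dvdn_pmul2l // !inE -[0]/(0%:R) !natZ_eq; try lia.
have [v_ltm|v_gem] := ltnP v m; first by rewrite /dvdn modn_small; lia.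
by rewrite -(subnK v_gem) dvdn_addl // /dvdn modn_small; lia.
Qed.

Lemma addrhK (z : G) : z + h + h = z.
Proof. by rewrite -addrA -mulr2n double_h addr0. Qed.

Lemma double_eq (y z : G) : (y *+ 2 == z *+ 2) = (y \in [set z; z + h]).
Proof. by rewrite -subr_eq0 -mulrnBl double_eq0 !inE subr_eq0 subr_eq addrC. Qed.

Lemma double_neq_h (y : G) : y *+ 2 != h.
Proof.
have m_lt : (m < 2 * m)%N by lia.
rewrite -[y]natr_Zp double_natZ -val_eqE /= !val_natZ -mul2n -muln_modr.
by rewrite (modn_small m_lt); apply/eqP => e; move: m_odd; rewrite -e oddM.
Qed.

Lemma double_neq_shift (y z : G) : y *+ 2 != z *+ 2 + h.
Proof. by rewrite addrC -subr_eq -mulrnBl double_neq_h. Qed.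

Lemma doubleP (c : G) : exists y : G, (y *+ 2 == c) || (y *+ 2 == c + h).
Proof.
rewrite -[c]natr_Zp; move: (nat_of_ord c) => v.
have [v_odd|v_even] := boolP (odd v).
  exists ((v + m)./2)%:R; rewrite double_natZ even_halfK ?natrD ?eqxx ?orbT //.
  by rewrite oddD v_odd m_odd.
by exists (v./2)%:R; rewrite double_natZ even_halfK ?eqxx.
Qed.

Lemma card_double_or_shift (c : G) :
  #|[set y | (y *+ 2 == c) || (y *+ 2 == c + h)]| = 2%N.
Proof.
have [y0 y0P] := doubleP c.
have fibre y : ((y *+ 2 == c) || (y *+ 2 == c + h)) = (y \in [set y0; y0 + h]).
  rewrite -double_eq; case/orP: y0P => /eqP y0E; last first.
    by rewrite -[c]addrhK -y0E addrhK (negbTE (double_neq_shift _ _)).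
  by rewrite -y0E (negbTE (double_neq_shift _ _)) orbF.
rewrite (eq_card (B := [set y0; y0 + h])) => [|y]; last by rewrite inE fibre.
by rewrite cards2 -{1}[y0]addr0 (inj_eq (addrI y0)) eq_sym h_neq0.
Qed.

Definition pm_double (y z : G) : bool :=
  (z *+ 2 == y *+ 2) || (z *+ 2 == - (y *+ 2)).

Lemma pm_double_transl (a y z : G) :
  pm_double a y -> pm_double a z = pm_double y z.
Proof. by rewrite /pm_double => /orP[]/eqP ->; rewrite ?opprK // orbC. Qed.

Lemma Sfam_eq (i : 'I_((m - 1) %/ 2)) :
  Sfam i = [set i.+1%:R; h - i.+1%:R; h + i.+1%:R; - i.+1%:R].
Proof.
have i_lt := ltn_ord i.
by rewrite /Sfam natrD !natrB ?pchar_Zp ?sub0r ?double_m_gt1 //; lia.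
Qed.

Lemma mem_Sfam (i : 'I_((m - 1) %/ 2)) (y : G) :
  (y \in Sfam i) = pm_double i.+1%:R y.
Proof.
rewrite Sfam_eq /pm_double; set a : G := i.+1%:R.
rewrite -(mulNrn a 2) !double_eq !inE !(addrC h).
by rewrite -!orbA; congr (_ || _); rewrite orbC -orbA.
Qed.

Lemma Sfam_block (i : 'I_((m - 1) %/ 2)) (y z : G) :
  y \in Sfam i -> (z \in Sfam i) = pm_double y z.
Proof. by rewrite !mem_Sfam; apply: pm_double_transl. Qed.

Lemma pm_double_succ_inj (i j : 'I_((m - 1) %/ 2)) :
  pm_double i.+1%:R j.+1%:R -> i = j.
Proof.
have i_lt := ltn_ord i; have j_lt := ltn_ord j.
rewrite /pm_double -[X in _ || X]subr_eq0 opprK !double_natZ -natrD.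
rewrite natZ_eq0 natZ_eq -!mul2n; try lia.
case/orP => [/eqP e | /dvdn_leq le_m]; first by apply: ord_inj; lia.
by exfalso; lia.
Qed.

Lemma Sfam_disjoint : pairwise_disjoint (@Sfam m).
Proof.
move=> i j /negP ij; rewrite disjoints_subset; apply/subsetP => y yi.
rewrite inE; apply/negP => yj; apply/ij/eqP/pm_double_succ_inj.
by rewrite -mem_Sfam (Sfam_block _ yi) -(Sfam_block _ yj) mem_Sfam /pm_double eqxx.
Qed.

Lemma Sfam_sub_notH (i : 'I_((m - 1) %/ 2)) : Sfam i \subset ~: Hsub m.
Proof.
have i_lt := ltn_ord i.
apply/subsetP => y; rewrite mem_Sfam inE -double_eq0; apply: contraL => /eqP y0.
rewrite /pm_double y0 !(eq_sym 0) oppr_eq0 orbb double_eq0 !inE -[0]/(0%:R).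
by rewrite !natZ_eq //; lia.
Qed.

Lemma card_Sfam (i : 'I_((m - 1) %/ 2)) : #|Sfam i| = 4%N.
Proof.
have i_lt := ltn_ord i.
rewrite /Sfam cards4 //= !inE !natZ_eq; lia.
Qed.

Lemma cover_Sfam : \bigcup_(i < (m - 1) %/ 2) Sfam i = ~: Hsub m.
Proof.
apply/eqP; rewrite eqEcard; apply/andP; split.
  by apply/bigcupsP => i _; apply: Sfam_sub_notH.
rewrite -[X in (_ <= X)%N]sum1_card partition_disjoint_bigcup; last first.
  exact: Sfam_disjoint.
under eq_bigr => i _ do rewrite sum1_card card_Sfam.
rewrite sum_nat_const card_ord -(leq_add2l #|Hsub m|) cardsC card_Z card_Hsub.
by have := odd_double_half m; rewrite m_odd -mul2n; lia.
Qed.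

Lemma pm_double_shift_notH (x y : G) : x \notin Hsub m ->
  pm_double y (y + x) = (y *+ 2 == - x) || (y *+ 2 == - x + h).
Proof.
move=> xH; rewrite /pm_double -subr_eq0 -[X in _ || X]subr_eq0 opprK.
have -> : (y + x) *+ 2 - y *+ 2 = x *+ 2 by ring.
have -> : (y + x) *+ 2 + y *+ 2 = (y *+ 2 + x) *+ 2 by ring.
by rewrite !double_eq0 (negbTE xH) !inE addr_eq0 -{2}[x]opprK subr_eq addrC.
Qed.

Lemma card_pm_double_shift_notH (x : G) : x \notin Hsub m ->
  #|[set y in ~: Hsub m | pm_double y (y + x)]| = 2%N.
Proof.
move=> xH; rewrite -[RHS](card_double_or_shift (- x)); apply: eq_card => y.
rewrite inE in_setC -double_eq0 pm_double_shift_notH // inE; apply: andb_idl.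
move=> P; apply: contraNneq xH => y0; move: P.
by rewrite y0 !(eq_sym 0) oppr_eq0 addr_eq0 (inj_eq oppr_inj) !inE.
Qed.

Lemma pm_double_shift_h (y : G) : pm_double y (y + h).
Proof. by rewrite /pm_double mulrnDl double_h addr0 eqxx. Qed.

Lemma shift_h_notH (y : G) : (y + h \in ~: Hsub m) = (y \in ~: Hsub m).
Proof. by rewrite !in_setC -!double_eq0 mulrnDl double_h addr0. Qed.

Lemma card_shift_notH (x : G) : x \notin Hsub m ->
  #|[set y in ~: Hsub m | y + x \in ~: Hsub m]| = (2 * m - 4)%N.
Proof.
move=> xH; set H' := [set y | y + x \in Hsub m].
have HH'_disj : [disjoint Hsub m & H'].
  rewrite disjoints_subset; apply/subsetP => y.
  rewrite in_setC -double_eq0 /H' in_set -double_eq0 mulrnDl => /eqP->.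
  by rewrite add0r double_eq0.
have -> : [set y in ~: Hsub m | y + x \in ~: Hsub m] = ~: (Hsub m :|: H').
  by apply/setP => y; rewrite !inE -!negb_or.
rewrite cardsCs setCK card_Z cardsU (disjoint_setI0 HH'_disj) cards0 subn0.
by rewrite /H' (card_preimset (Hsub m) (addIr x)) card_Hsub.
Qed.

Lemma card_pm_double_shift_h :
  #|[set y in ~: Hsub m | pm_double y (y + h)]| = (2 * m - 2)%N.
Proof.
rewrite -card_notH; apply: eq_card => y.
by rewrite inE pm_double_shift_h andbT.
Qed.

Lemma card_shift_h :
  #|[set y in ~: Hsub m | y + h \in ~: Hsub m]| = (2 * m - 2)%N.
Proof. by rewrite -card_notH; apply: eq_card => y; rewrite inE shift_h_notH andbb. Qed.

End CyclicOfOddHalfOrder.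

Theorem mainTheorem4 (m : nat) (hodd : odd m) (hm : (3 < m)%N) :
  partitions (@Sfam m) (~: Hsub m) /\
  DPDF (2 * m) 4 2 (2 * m - 2) (@Sfam m) /\
  EPDF (2 * m) 4 (2 * m - 6) 0 (@Sfam m).
Proof.
have disj := Sfam_disjoint hodd; have cover := cover_Sfam hodd.
have base : pdf_base (2 * m) 4 (@Sfam m).
  split=> [||i|//]; [exact: card_Z | exact: card_Sfam |].
  by apply: contra (subsetP (Sfam_sub_notH hodd i) 0) _; rewrite !inE eqxx.
have intE x : x != 0 ->
    int_mult (@Sfam m) x = #|[set y in ~: Hsub m | pm_double y (y + x)]|.
  by move=> x0; rewrite (int_multE disj x0 (fun i y => Sfam_block hodd (y + x))) cover.
have int_extE x : x != 0 -> (int_mult (@Sfam m) x + ext_mult (@Sfam m) x =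
    #|[set y in ~: Hsub m | (y + x)%R \in ~: Hsub m]|)%N.
  by move=> x0; rewrite int_add_ext_mult // cover.
have in_Hsub x : x != 0 -> x \in Hsub m -> x = m%:R.
  by move=> x0; rewrite !inE (negbTE x0) => /eqP.
split; first by [].
split; split=> // x x0; [|have := int_extE x x0]; rewrite intE // cover in_setC.
  case: (boolP (x \in Hsub m)) => [/(in_Hsub _ x0)-> | xH] /=.
    exact: card_pm_double_shift_h.
  exact: card_pm_double_shift_notH.
case: (boolP (x \in Hsub m)) => [/(in_Hsub _ x0)-> | xH] /=.
  by rewrite (card_pm_double_shift_h hodd) (card_shift_h hodd); lia.
by rewrite (card_pm_double_shift_notH hodd) // (card_shift_notH hodd) //; lia.
Qed.
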